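(* Let $L$ be a geometric lattice of rank $r+1$ with atoms linearly ordered. If $(b_1,\dots,b_i,b_{i+1},\dots,b_{r+1})$ is the minimal labeling of a facet of $\Delta(L)$ and $b_i<b_{i+1}$, then $(b_1,\dots,b_{i+1},b_i,\dots,b_{r+1})$ (the sequence with $b_i$ and $b_{i+1}$ interchanged) is also the minimal labeling of a facet of $\Delta(L)$.
   Context: A geometric lattice is a finite graded atomic lattice whose rank function $\rho$ satisfies $\rho(x\vee y)+\rho(x\wedge y)\le \rho(x)+\rho(y)$. Facets of the order complex $\Delta(L)$ correspond to maximal chains $\hat 0=x_0<x_1<\dots<x_{r+1}=\hat 1$ of $L$. Fix a linear order on the atoms. For a cover $x\lessdot y$, let $\lambda(x,y)$ be the least atom $a$ with $x\vee a=y$; the minimal labeling of the facet is $(\lambda(x_0,x_1),\dots,\lambda(x_r,x_{r+1}))$. A sequence of atoms is ''the minimal labeling of a facet'' if it equals the minimal labeling of some maximal chain. *)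

From mathcomp Require Import all_boot all_order.
Set Implicit Arguments. Unset Strict Implicit. Unset Printing Implicit Defensive.
Import Order.Theory.
Local Open Scope order_scope.

Section GeomLattice.
Variables (d : Order.disp_t) (L : finTBLatticeType d).

Definition covers (x y : L) : bool :=
  (x < y) && [forall z : L, ~~ ((x < z) && (z < y))].

Definition atom (a : L) : bool := covers \bot a.

(* rho is a rank function: rho \bot = 0 and rho increases by one along covers
   (existence of such a function = L is graded, and then rho is its rank). *)
Definition rank_function (rho : L -> nat) : Prop :=
  rho \bot = 0%N /\ forall x y : L, covers x y -> rho y = (rho x).+1.

Definition atomic : Prop :=
  forall x : L, x = \join_(a | atom a && (a <= x)) a.

Definition geometric (rho : L -> nat) : Prop :=
  [/\ rank_function rho, atomic &
      forall x y : L, (rho (x `|` y) + rho (x `&` y) <= rho x + rho y)%N].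

(* maximal chain \bot = x_0 < x_1 < ... < x_k = \top, represented by
   c = [:: x_1; ...; x_k] *)
Definition max_chain (c : seq L) : bool :=
  path covers \bot c && (last \bot c == \top).

(* linear order on atoms given by an injective weight w: a < b iff w a < w b.
   a is the minimal label of the cover x <. y *)
Definition min_label (w : L -> nat) (x y a : L) : Prop :=
  [/\ atom a, x `|` a = y &
      forall b : L, atom b -> x `|` b = y -> (w a <= w b)%N].

(* b is the minimal labeling of (the facet given by) the maximal chain c *)
Definition labeling_of (w : L -> nat) (c b : seq L) : Prop :=
  size b = size c /\
  forall j, (j < size c)%N ->
    min_label w (nth \bot (\bot :: c) j) (nth \bot c j) (nth \bot b j).

Definition is_min_labeling (w : L -> nat) (b : seq L) : Prop :=
  exists c : seq L, max_chain c /\ labeling_of w c b.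

End GeomLattice.

Definition swap_adj (T : Type) (i : nat) (s : seq T) : seq T :=
  match drop i s with
  | x :: y :: t => take i s ++ y :: x :: t
  | _ => s
  end.

(* Exchanging the labels of two consecutive covers x <. u <. z amounts to
   replacing u by y := x \/ q, where q is the minimal label of u <. z.  By
   semimodularity x <. y, and by rank y <. z.  Every atom a with x \/ a = y
   satisfies either a <= u, which would force y = u, or u \/ a = z; so q is
   the minimal label of x <. y.  Every atom a with y \/ a = z satisfies either
   a <= u, whence x \/ a = u, or u \/ a = z; so its weight is at least that of
   the label p of x <. u or that of q, and since p < q the minimal label of
   y <. z is p. *)
From mathcomp Require Import all_boot all_order zify.
Import Order.Theory.
Local Open Scope order_scope.

Set Implicit Arguments.
Unset Strict Implicit.

Section SeqSurgery.
Variables (T : Type) (x0 : T).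

Lemma size_swap_adj i (s : seq T) : size (swap_adj i s) = size s.
Proof.
rewrite /swap_adj; case E: (drop i s) => [|a [|b t]] //.
by rewrite -{2}(cat_take_drop i s) E !size_cat.
Qed.

Lemma nth_swap_adj i s j : (i.+1 < size s)%N ->
  nth x0 (swap_adj i s) j =
  if j == i then nth x0 s i.+1 else if j == i.+1 then nth x0 s i else nth x0 s j.
Proof.
move=> ilt; rewrite /swap_adj (drop_nth x0 (ltnW ilt)) (drop_nth x0 ilt).
rewrite nth_cat size_take (ltnW ilt).
case: (ltngtP j i) => [ji | ij | ->]; last by rewrite subnn.
- by rewrite nth_take // (ltn_eqF (leqW ji)).
- case: (eqVneq j i.+1) => [-> | ji1]; first by rewrite ssrnat.subSnn.
  have ij2 : (i.+2 <= j)%N by rewrite ltn_neqAle eq_sym ji1 ij.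
  have -> : (j - i = (j - i.+2).+2)%N by lia.
  by rewrite /= nth_drop subnKC.
Qed.

Lemma steps_set_nth (R : nat -> T -> T -> Prop) (s : seq T) i y :
  (i.+1 < size s)%N ->
  (forall j, (j < size s)%N -> j != i -> j != i.+1 ->
     R j (nth x0 (x0 :: s) j) (nth x0 s j)) ->
  R i (nth x0 (x0 :: s) i) y -> R i.+1 y (nth x0 s i.+1) ->
  forall j, (j < size s)%N ->
    R j (nth x0 (x0 :: set_nth x0 s i y) j) (nth x0 (set_nth x0 s i y) j).
Proof.
move=> ilt Rs Ri Ri1 j jlt.
have Eprev : nth x0 (x0 :: set_nth x0 s i y) j =
             if j == i.+1 then y else nth x0 (x0 :: s) j.
  by case: j {jlt} => //= j; rewrite nth_set_nth /= eqSS.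
rewrite Eprev nth_set_nth /=.
have [-> | ji] := eqVneq j i; first by rewrite (ltn_eqF (ltnSn i)).
by have [-> // | ji1] := eqVneq j i.+1; exact: Rs.
Qed.

Lemma last_set_nth (s : seq T) i y :
  (i.+1 < size s)%N -> last x0 (set_nth x0 s i y) = last x0 s.
Proof.
move=> ilt; rewrite !(last_nth x0) size_set_nth (maxn_idPr (ltnW ilt)).
case: (size s) ilt => // n ilt /=; rewrite nth_set_nth /=.
by rewrite ltnS in ilt; rewrite (gtn_eqF ilt).
Qed.

End SeqSurgery.

Section Covers.
Variables (d : Order.disp_t) (L : finTBLatticeType d).
Implicit Types x y z t a : L.

Lemma covers_lt x y : covers x y -> x < y.
Proof. by case/andP. Qed.

Lemma covers_between x y t : covers x y -> x <= t -> t <= y -> (t == x) || (t == y).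
Proof.
case/andP=> _ /forallP /(_ t) ntt xt ty; apply: contraNT ntt.
by rewrite negb_or !lt_def xt ty (eq_sym y) !andbT.
Qed.

Lemma covers_join x u a : covers x u -> a <= u -> ~~ (a <= x) -> x `|` a = u.
Proof.
move=> cxu au nax; have xau : x `|` a <= u by rewrite leUx (ltW (covers_lt cxu)) au.
have /orP[/eqP xaE | /eqP //] := covers_between cxu (leUl x a) xau.
by move: nax; rewrite -xaE leUr.
Qed.

Lemma atom_meet_eq0 x a : atom a -> ~~ (a <= x) -> x `&` a = \bot.
Proof.
move=> aa nax; have /orP[/eqP // | /eqP xaE] := covers_between aa (le0x _) (leIr a x).
by move: nax; rewrite -xaE leIl.
Qed.

Lemma min_label_not_le (w : L -> nat) x y a : x < y -> min_label w x y a -> ~~ (a <= x).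
Proof. by move=> xy [_ xay _]; apply: contraTN xy => ax; rewrite -xay (join_l ax) ltxx. Qed.

Lemma lt_exists_covers x y : x < y -> exists2 z, covers x z & z <= y.
Proof.
have [n] := ubnP #|[set t | t < y]|; elim: n y => // n IH y ltyn xy.
have [cxy | ] := boolP (covers x y); first by exists y.
rewrite /covers xy negb_forall => /existsP[t]; rewrite negbK => /andP[xt ty].
have [|z cxz zt] := IH t _ xt; last by exists z; rewrite // (le_trans zt (ltW ty)).
apply: (leq_trans _ (ltnSE ltyn)); apply: proper_card; apply/properP; split.
  by apply/subsetP => s; rewrite !inE => /lt_trans; apply.
by exists t; rewrite !inE ?ltxx.
Qed.

Section RankFunction.
Variable rho : L -> nat.
Hypothesis rho_covers : forall x y, covers x y -> rho y = (rho x).+1.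

Lemma rank_lt x y : x < y -> (rho x < rho y)%N.
Proof.
have [n] := ubnP #|[set t | x < t]|; elim: n x => // n IH x ltxn xy.
have [z cxz zy] := lt_exists_covers xy.
rewrite -ltnS -(rho_covers cxz) ltnS.
case: (eqVneq z y) => [-> // | zy']; apply/ltnW/IH; last by rewrite lt_neqAle zy' zy.
apply: (leq_trans _ (ltnSE ltxn)); apply: proper_card; apply/properP; split.
  by apply/subsetP => s; rewrite !inE; apply: lt_trans (covers_lt cxz).
by exists z; rewrite !inE ?ltxx ?covers_lt.
Qed.

Lemma rank_covers x y : x <= y -> rho y = (rho x).+1 -> covers x y.
Proof.
move=> xy rhoy; rewrite /covers lt_neqAle xy andbT.
apply/andP; split; first by apply/eqP => xyE; move: rhoy; rewrite xyE; apply: n_Sn.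
apply/forallP => t; apply/negP => /andP[/rank_lt xt /rank_lt ty].
by move: (leq_ltn_trans xt ty); rewrite rhoy ltnn.
Qed.

End RankFunction.

Section Semimodular.
Variable rho : L -> nat.
Hypothesis rank_rho : rank_function rho.
Hypothesis rho_semimodular :
  forall x y, (rho (x `|` y) + rho (x `&` y) <= rho x + rho y)%N.

Lemma atom_covers_join x a : atom a -> ~~ (a <= x) -> covers x (x `|` a).
Proof.
move=> aa nax; have [rho0 rhoS] := rank_rho.
have x_lt_xa : x < x `|` a.
  by rewrite lt_neqAle leUl andbT; apply: contraNN nax => /eqP ->; rewrite leUr.
apply: (rank_covers rhoS (ltW x_lt_xa)); apply/eqP.
rewrite eqn_leq (rank_lt rhoS x_lt_xa) andbT.
by have := rho_semimodular x a; rewrite atom_meet_eq0 // rho0 (rhoS _ _ aa) rho0 addn0 addn1.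
Qed.

Section Exchange.
Variables (w : L -> nat) (x u z p q : L).
Hypotheses (cxu : covers x u) (cuz : covers u z).
Hypotheses (mlp : min_label w x u p) (mlq : min_label w u z q).

Let xu : x <= u := ltW (covers_lt cxu).
Let nqu : ~~ (q <= u) := min_label_not_le (covers_lt cuz) mlq.

Lemma covers_exchange_lower : covers x (x `|` q).
Proof.
have [qa _ _] := mlq; apply: atom_covers_join qa _.
by apply: contraNN nqu => qx; apply: le_trans qx xu.
Qed.

Lemma join_exchange_le : x `|` q <= z.
Proof.
have [_ uqz _] := mlq.
by rewrite -uqz leUx leUr (le_trans xu) ?leUl.
Qed.

Lemma covers_exchange_upper : covers (x `|` q) z.
Proof.
have [_ rhoS] := rank_rho.
by apply: (rank_covers rhoS join_exchange_le); rewrite (rhoS _ _ covers_exchange_lower)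
  (rhoS _ _ cuz) (rhoS _ _ cxu).
Qed.

Lemma min_label_exchange_lower : min_label w x (x `|` q) q.
Proof.
have [qa _ minq] := mlq; split=> // a aa xay.
have [au | nau] := boolP (a <= u).
  have yu : x `|` q <= u by rewrite -xay leUx au xu.
  have := covers_between cxu (leUl x q) yu.
  rewrite (gt_eqF (covers_lt covers_exchange_lower)) => /eqP yuE.
  by move: nqu; rewrite -yuE leUr.
apply: minq aa (covers_join cuz _ nau).
by rewrite (le_trans _ join_exchange_le) // -xay leUr.
Qed.

Hypothesis wpq : (w p < w q)%N.

Lemma min_label_exchange_upper : min_label w (x `|` q) z p.
Proof.
have [pa xpu minp] := mlp; have [_ uqz minq] := mlq.
split=> //; first by rewrite joinAC xpu.
move=> a aa yaz; have az : a <= z by rewrite -yaz leUr.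
have [au | nau] := boolP (a <= u); last first.
  exact: leq_trans (ltnW wpq) (minq a aa (covers_join cuz az nau)).
apply: minp aa (covers_join cxu au _); apply: contraTN (covers_lt covers_exchange_upper).
by move=> ax; rewrite -yaz (join_l (le_trans ax (leUl x q))) ltxx.
Qed.

End Exchange.
End Semimodular.
End Covers.

Theorem lemma4p3 (d : Order.disp_t) (L : finTBLatticeType d)
    (rho : L -> nat) (r : nat) (w : L -> nat) (b : seq L) (i : nat) :
  geometric rho -> rho \top = r.+1 ->
  {in [pred a : L | atom a] &, injective w} ->
  is_min_labeling w b ->
  (i.+1 < size b)%N ->
  (w (nth \bot b i) < w (nth \bot b i.+1))%N ->
  is_min_labeling w (swap_adj i b).
Proof.
move=> [rank_rho _ semimod] _ _ [c [/andP[pc /eqP lc] [sz lab]]] ilt wpq.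
rewrite sz in ilt; have ilt' := ltnW ilt.
have cxu := (pathP \bot pc) i ilt'; have cuz := (pathP \bot pc) i.+1 ilt.
have mlp := lab i ilt'; have mlq := lab i.+1 ilt.
have cxy := covers_exchange_lower rank_rho semimod cxu cuz mlq.
have cyz := covers_exchange_upper rank_rho semimod cxu cuz mlq.
have mlq' := min_label_exchange_lower rank_rho semimod cxu cuz mlq.
have mlp' := min_label_exchange_upper rank_rho semimod cxu cuz mlp mlq wpq.
set y := nth \bot (\bot :: c) i `|` nth \bot b i.+1.
have size_c' : size (set_nth \bot c i y) = size c.
  by rewrite size_set_nth (maxn_idPr ilt').
exists (set_nth \bot c i y).
split; first apply/andP; split.
- apply/(pathP \bot); rewrite size_c'.
  apply: (steps_set_nth (R := fun _ => @covers d L)) => // j jlt _ _.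
  exact: (pathP \bot pc).
- by rewrite last_set_nth ?lc.
- by rewrite size_swap_adj size_c' sz.
- rewrite size_c'.
  apply: (steps_set_nth (R := fun j x y => min_label w x y (nth \bot (swap_adj i b) j)));
    rewrite ?nth_swap_adj ?sz ?eqxx ?(gtn_eqF (ltnSn i)) //.
  move=> j jlt ji ji1; rewrite nth_swap_adj ?sz // (negbTE ji) (negbTE ji1).
  exact: lab.
Qed.
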